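(* Let $f \in \mathbb{R}[x_1,\ldots,x_n]$ be a nonzero polynomial. Then there is a monomial $m$ occurring in $f$ (i.e. with nonzero coefficient in $f$) such that $\dim \partial^{=k} f \geq \dim \partial^{=k} m$ for every integer $k \geq 0$. In particular, if every monomial occurring in $f$ contains at least $r$ distinct variables, then $\dim \partial^{=k} f \geq \binom{r}{k}$ for every $k$.
   Context: For $\beta=(\beta_1,\ldots,\beta_n)\in\mathbb{N}^n$, $\partial_\beta f$ denotes the partial derivative of $f$ obtained by differentiating $\beta_i$ times with respect to $x_i$ for each $i$. For $k\ge 0$, $\partial^{=k} f$ denotes the real linear space spanned by all $\partial_\beta f$ with $\beta_1+\cdots+\beta_n=k$. The dimension $\dim \partial^{=k} m$ for a monomial $m$ is defined in the same way (it does not depend on the nonzero scalar multiple of $m$). *)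

From HB Require Import structures.
From mathcomp Require Import all_boot all_order all_algebra.
From mathcomp Require Import reals.
From mathcomp Require Import mpoly.

Set Implicit Arguments.
Unset Strict Implicit.
Unset Printing Implicit Defensive.

Import Order.TTheory GRing.Theory Num.Theory.
Local Open Scope ring_scope.

Section LinAlg.
Variables (K : fieldType) (V : lmodType K).

Definition span (S : V -> Prop) : V -> Prop :=
  fun v => exists s : seq V, (forall x, x \in s -> S x) /\
    exists c : nat -> K, v = \sum_(i < size s) c i *: s`_i.

Definition lin_indep (s : seq V) : Prop :=
  forall c : nat -> K, \sum_(i < size s) c i *: s`_i = 0 ->
    forall i, (i < size s)%N -> c i = 0.

Definition is_dim (W : V -> Prop) (d : nat) : Prop :=
  (exists s : seq V, size s = d /\ (forall x, x \in s -> W x) /\ lin_indep s) /\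
  (forall s : seq V, (forall x, x \in s -> W x) -> lin_indep s -> (size s <= d)%N).
End LinAlg.

Section Deriv.
Variables (R : realType) (n : nat).

(* partial^{=k} f : the real span of all partial_beta f with |beta| = k.
   [mderivm b f] differentiates b i times w.r.t. x_i for each i. *)
Definition derivk_space (k : nat) (f : {mpoly R[n]}) : {mpoly R[n]} -> Prop :=
  span (fun g => exists b : 'X_{1..n}, mdeg b = k /\ g = mderivm b f).

Definition nvars (m : 'X_{1..n}) : nat := #|[set i : 'I_n | m i != 0%N]|.
End Deriv.

(* Let [m] be the leading monomial of [f].  For [b <= m] the derivative
   [d_b f] has a nonzero coefficient at [m - b], whereas [d_b' f] vanishes there
   for every [b' > b] in monomial order, since [(m - b) + b' > m].  Hence the
   [d_b f] with [b <= m], [|b| = k] are linearly independent, while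
   [d^{=k} X^m] is spanned by the monomials [X^(m - b)] for the same [b].  The
   binomial bound follows by taking for [b] the 0/1 vectors of the [k]-subsets
   of the variables of [m]. *)

From Pilot Require Import Defs.
From HB Require Import structures.
From mathcomp Require Import all_boot all_order all_algebra.
From mathcomp Require Import reals.
From mathcomp Require Import mpoly.
From Stdlib Require Import Classical.

Set Implicit Arguments.
Unset Strict Implicit.
Unset Printing Implicit Defensive.

Import Order.TTheory GRing.Theory Num.Theory.
Local Open Scope ring_scope.

Section LinearSpan.
Variables (K : fieldType) (V : lmodType K).
Implicit Types (s t : seq V) (S W : V -> Prop).

Definition in_span t v := exists c : nat -> K, v = \sum_(i < size t) c i *: t`_i.

Lemma in_span0 t : in_span t 0.
Proof. by exists (fun=> 0); rewrite big1 // => i _; rewrite scale0r. Qed.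

Lemma in_spanD t u v : in_span t u -> in_span t v -> in_span t (u + v).
Proof.
move=> [c ->] [d ->]; exists (fun i => c i + d i).
by rewrite -big_split; apply: eq_bigr => i _; rewrite scalerDl.
Qed.

Lemma in_spanZ t a v : in_span t v -> in_span t (a *: v).
Proof.
move=> [c ->]; exists (fun i => a * c i).
by rewrite scaler_sumr; apply: eq_bigr => i _; rewrite scalerA.
Qed.

Lemma mem_in_span t x : x \in t -> in_span t x.
Proof.
move=> xt; have xt' : (index x t < size t)%N by rewrite index_mem.
exists (fun i => (i == index x t)%:R).
rewrite (bigD1 (Ordinal xt')) //= eqxx scale1r nth_index // big1 ?addr0 //.
move=> i /eqP ne_i; case: eqP => [eq_i|_]; last by rewrite scale0r.
by case: ne_i; apply: val_inj.
Qed.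

Lemma in_span_sum t (I : finType) (P : pred I) (F : I -> V) :
  (forall i, P i -> in_span t (F i)) -> in_span t (\sum_(i | P i) F i).
Proof. by apply: big_ind; [exact: in_span0 | exact: in_spanD]. Qed.

Lemma span_in_span S t v :
  (forall x, S x -> in_span t x) -> Defs.span S v -> in_span t v.
Proof.
move=> St [s [sS [c ->]]]; apply: in_span_sum => i _; apply: in_spanZ.
by apply/St/sS/mem_nth.
Qed.

Lemma mem_span S x : S x -> Defs.span S x.
Proof.
move=> Sx; exists [:: x]; split; first by move=> y; rewrite inE => /eqP ->.
by exists (fun=> 1); rewrite big_ord1 scale1r.
Qed.

Lemma wide_mx_left_kernel p q (M : 'M[K]_(p, q)) :
  (q < p)%N -> exists2 u : 'rV_p, u != 0 & u *m M = 0.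
Proof.
move=> lt_qp; have : kermx M != 0.
  by rewrite kermx_eq0 /row_free neq_ltn (leq_ltn_trans (rank_leq_col M)).
by case/rowV0Pn=> u /sub_kermxP uM nz_u; exists u.
Qed.

(* The coordinate matrix of [s] in [t] has more rows than columns, so a nonzero
   vector of its left kernel yields a vanishing combination of [s]. *)
Lemma lin_indep_size_le s t :
  lin_indep s -> (forall x, x \in s -> in_span t x) -> (size s <= size t)%N.
Proof.
move=> indep_s s_t; rewrite leqNgt; apply/negP => lt_ts.
have /fin_all_exists [C defC] (i : 'I_(size s)) :
    exists c : nat -> K, s`_i = \sum_(j < size t) c j *: t`_j.
  exact/s_t/mem_nth.
pose M := \matrix_(i < size s, j < size t) C i j.
have [u nz_u uM] := wide_mx_left_kernel M lt_ts.
pose c i := if insub i is Some j then u 0 j else 0.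
have c_u (j : 'I_(size s)) : c j = u 0 j by rewrite /c valK.
suff /indep_s c0 : \sum_(i < size s) c i *: s`_i = 0.
  by case/eqP: nz_u; apply/rowP => j; rewrite mxE -c_u c0.
transitivity (\sum_(j < size t) (u *m M) 0 j *: t`_j); last first.
  by rewrite uM big1 // => j _; rewrite mxE scale0r.
under eq_bigr do rewrite c_u defC scaler_sumr.
rewrite exchange_big; apply: eq_bigr => j _ /=.
by rewrite mxE scaler_suml; apply: eq_bigr => i _; rewrite mxE scalerA.
Qed.

Lemma ex_max_bounded (P : nat -> Prop) N : P 0%N ->
  (forall e, P e -> (e <= N)%N) -> exists d, P d /\ forall e, P e -> (e <= d)%N.
Proof.
move=> P0; elim: N => [|N IH] le_N; first by exists 0%N.
have [PN1|nPN1] := classic (P N.+1); first by exists N.+1.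
apply: IH => e Pe; move: (le_N e Pe); rewrite leq_eqVlt => /orP[/eqP e_N1|//].
by case: nPN1; rewrite -e_N1.
Qed.

Lemma is_dim_span_exists S t :
  (forall x, S x -> in_span t x) -> exists d, is_dim (Defs.span S) d.
Proof.
move=> St; pose P d := exists s, [/\ size s = d,
  forall x, x \in s -> Defs.span S x & lin_indep s].
have P0 : P 0%N by exists [::]; split=> // c _ i.
have le_t e : P e -> (e <= size t)%N.
  move=> [s [<- sS indep_s]]; apply: lin_indep_size_le => // x /sS.
  exact: span_in_span.
have [d [Pd max_d]] := ex_max_bounded P0 le_t.
have [s [size_s sS indep_s]] := Pd.
by exists d; split=> [|s' s'S indep_s']; [exists s | apply: max_d; exists s'].
Qed.

Lemma is_dim_le_size W d t :
  is_dim W d -> (forall x, W x -> in_span t x) -> (d <= size t)%N.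
Proof.
move=> [[s [<- [sW indep_s]]] _] Wt.
by apply: lin_indep_size_le => // x /sW /Wt.
Qed.

End LinearSpan.

Section MultinomialDerivatives.
Variables (n : nat) (R : ringType).
Implicit Types (b g mu : 'X_{1..n}) (p : {mpoly R[n]}).

Definition ffactm g b : nat := \prod_(i < n) g i ^_ b i.

Lemma ffactm_gt0 g b : (0 < ffactm g b)%N = (b <= g)%MM.
Proof.
apply/idP/mnm_lepP => [pos i | le_bg]; last by apply: prodn_gt0 => i; rewrite ffact_gt0.
by move: pos; rewrite /ffactm (bigD1 i) //= muln_gt0 ffact_gt0 => /andP[].
Qed.

Lemma mcoeff_mderivm b p mu :
  (mderivm b p)@_mu = p@_(mu + b) *+ ffactm (mu + b) b.
Proof.
elim/mpolyind: p => [|c m q _ _ IH]; first by rewrite raddf0 !mcoeff0 mul0rn.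
rewrite mderivmD mderivmZ mderivmX !mcoeffD !mcoeffZ IH !mcoeffX mulrnDl.
rewrite -[in RHS]mulrnAr -/(ffactm m b); congr (c * _ + _).
rewrite mulr_natl.
have [le_bm|not_le_bm] := boolP (b <= m)%MM.
  have -> : (m == mu + b)%MM = (m - b == mu)%MM.
    by rewrite -{1}(submK le_bm) eqm_add2r.
  by case: eqP => [<-|]; rewrite ?submK ?mul0rn.
have /eqP -> : ffactm m b == 0%N by rewrite -leqn0 leqNgt ffactm_gt0.
rewrite mulr0n; case: eqP => [eq_m|]; last by rewrite mul0rn.
by case/negP: not_le_bm; rewrite eq_m lem_addl.
Qed.

End MultinomialDerivatives.

Section LeadingMonomialDerivatives.
Variables (n : nat) (R : numFieldType) (f : {mpoly R[n]}).
Hypothesis f_neq0 : f != 0.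
Implicit Types (b : 'X_{1..n}) (L : seq 'X_{1..n}).

Lemma mcoeff_mderivm_mlead b :
  (b <= mlead f)%MM -> (mderivm b f)@_(mlead f - b) != 0.
Proof.
move=> le_b; rewrite mcoeff_mderivm submK // mulrn_eq0 negb_or -lt0n ffactm_gt0.
by rewrite le_b mleadc_eq0.
Qed.

Lemma mcoeff_mderivm_gt b b' :
  (b <= mlead f)%MM -> (b < b')%O -> (mderivm b' f)@_(mlead f - b) = 0.
Proof.
move=> le_b lt_bb'; rewrite mcoeff_mderivm mcoeff_gt_mlead ?mul0rn //.
by rewrite -{1}(submK le_b) ltmc_add2r.
Qed.

(* Take the smallest [b] in monomial order with nonzero weight: at the
   monomial [mlead f - b] only the derivative [mderivm b f] survives. *)
Lemma lin_indep_mderivm L : uniq L -> (forall b, b \in L -> (b <= mlead f)%MM) ->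
  lin_indep [seq mderivm b f | b <- L].
Proof.
move=> uniq_L le_L; rewrite /lin_indep size_map => c sum0 i lt_i.
apply/eqP; apply: contraT => nz_ci.
have [j nz_cj min_j] := @arg_minP _ _ _ (Ordinal lt_i)
  (fun j : 'I_(size L) => c j != 0) (fun j => nth 0%MM L j) nz_ci.
have le_j : (nth 0%MM L j <= mlead f)%MM by apply/le_L/mem_nth.
have /eqP := congr1 (mcoeff (mlead f - nth 0%MM L j)) sum0.
rewrite mcoeff0 raddf_sum (bigD1 j) //= big1 ?addr0.
  rewrite mcoeffZ (nth_map 0%MM) // mulf_eq0 (negPf nz_cj).
  by rewrite (negPf (mcoeff_mderivm_mlead le_j)).
move=> k ne_kj; rewrite mcoeffZ (nth_map 0%MM) //.
have [->|nz_ck] := eqVneq (c k) 0; first by rewrite mul0r.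
rewrite (mcoeff_mderivm_gt le_j) ?mulr0 // lt_neqAle min_j // andbT.
by rewrite nth_uniq // eq_sym.
Qed.

End LeadingMonomialDerivatives.

Section DerivativeSpaces.
Variables (R : realType) (n : nat).
Implicit Types (b m : 'X_{1..n}) (p f : {mpoly R[n]}).

Lemma derivk_space_mderivm k b p : mdeg b = k -> derivk_space k p (mderivm b p).
Proof. by move=> deg_b; apply: mem_span; exists b. Qed.

Lemma derivk_space_dim_exists k p : exists d, is_dim (derivk_space k p) d.
Proof.
apply: (is_dim_span_exists (t := [seq mderivm (val b) p | b : 'X_{1..n < k.+1}])).
move=> _ [b [deg_b ->]]; apply/mem_in_span/mapP.
have lt_b : (mdeg b < k.+1)%N by rewrite deg_b.
by exists (BMultinom lt_b); rewrite ?mem_enum.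
Qed.

Definition deg_divisors m k : seq 'X_{1..n} :=
  map val (enum [pred b : 'X_{1..n < k.+1} | (val b <= m)%MM && (mdeg b == k)]).

Lemma mem_deg_divisors m k b :
  (b \in deg_divisors m k) = (b <= m)%MM && (mdeg b == k).
Proof.
apply/mapP/idP => [[b' b'P ->]|/andP[le_bm /eqP deg_b]].
  by move: b'P; rewrite mem_enum.
have lt_b : (mdeg b < k.+1)%N by rewrite deg_b.
by exists (BMultinom lt_b); rewrite // mem_enum inE /= le_bm deg_b eqxx.
Qed.

Lemma uniq_deg_divisors m k : uniq (deg_divisors m k).
Proof. by rewrite map_inj_uniq ?enum_uniq //; apply: val_inj. Qed.

Lemma dim_derivk_monomial_le m k d :
  is_dim (derivk_space k 'X_[R, m]) d -> (d <= size (deg_divisors m k))%N.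
Proof.
move=> dim_d; rewrite -(size_map (fun b => 'X_[R, m - b])).
apply: (is_dim_le_size dim_d) => x; apply: span_in_span => _ [b [deg_b ->]].
rewrite mderivmX; have [le_bm|not_le_bm] := boolP (b <= m)%MM.
  apply/in_spanZ/mem_in_span/map_f.
  by rewrite mem_deg_divisors le_bm deg_b eqxx.
rewrite -/(ffactm m b); suff -> : ffactm m b = 0%N by rewrite scale0r; apply: in_span0.
by apply/eqP; rewrite -leqn0 leqNgt ffactm_gt0.
Qed.

Lemma dim_derivk_ge f k d L : f != 0 -> is_dim (derivk_space k f) d -> uniq L ->
  (forall b, b \in L -> (b <= mlead f)%MM && (mdeg b == k)) -> (size L <= d)%N.
Proof.
move=> nz_f [_ max_d] uniq_L L_le; rewrite -(size_map (fun b => mderivm b f)).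
apply: max_d.
  move=> _ /mapP[b /L_le /andP[_ /eqP deg_b] ->].
  exact: derivk_space_mderivm.
by apply: lin_indep_mderivm => // b /L_le /andP[].
Qed.

Definition mindicator (T : {set 'I_n}) : 'X_{1..n} :=
  [multinom (i \in T : nat) | i < n].

Lemma mindicator_inj : injective mindicator.
Proof.
move=> T1 T2 /mnmP eq_T; apply/setP => i.
by have := eq_T i; rewrite !mnmE; do 2!case: (_ \in _).
Qed.

Lemma mdeg_mindicator (T : {set 'I_n}) : mdeg (mindicator T) = #|T|.
Proof.
rewrite mdegE -sum1_card [RHS]big_mkcond; apply: eq_bigr => i _.
by rewrite mnmE; case: (i \in T).
Qed.

Lemma mindicator_le (T : {set 'I_n}) m :
  T \subset [set i | m i != 0%N] -> (mindicator T <= m)%MM.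
Proof.
move=> /subsetP sub_T; apply/mnm_lepP => i; rewrite mnmE.
by case: (boolP (i \in T)) => // /sub_T; rewrite inE lt0n.
Qed.

Lemma binomial_nvars_le_dim_derivk f k d : f != 0 ->
  is_dim (derivk_space k f) d -> ('C(nvars (mlead f), k) <= d)%N.
Proof.
move=> nz_f dim_d; rewrite /nvars -cards_draws cardE -(size_map mindicator).
apply: (dim_derivk_ge nz_f dim_d).
  by rewrite map_inj_uniq ?enum_uniq //; apply: mindicator_inj.
move=> b /mapP[T]; rewrite mem_enum inE => /andP[sub_T card_T] ->.
by rewrite mindicator_le // mdeg_mindicator.
Qed.

End DerivativeSpaces.

Theorem theorem1 (R : realType) (n : nat) (f : {mpoly R[n]}) (hf : f != 0) :
  (exists2 m : 'X_{1..n}, m \in msupp f &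
     forall k : nat, exists d_f d_m : nat,
       [/\ is_dim (derivk_space k f) d_f,
           is_dim (derivk_space k 'X_[R, m]) d_m & (d_m <= d_f)%N])
  /\
  (forall r : nat, (forall m : 'X_{1..n}, m \in msupp f -> (r <= nvars m)%N) ->
     forall k : nat, exists d_f : nat,
       is_dim (derivk_space k f) d_f /\ ('C(r, k) <= d_f)%N).
Proof.
have lead_f := mlead_supp hf.
split=> [|r r_le k].
  exists (mlead f) => // k.
  have [d_f dim_f] := derivk_space_dim_exists k f.
  have [d_m dim_m] := derivk_space_dim_exists k 'X_[R, mlead f].
  exists d_f, d_m; split=> //.
  apply: leq_trans (dim_derivk_monomial_le dim_m) _.
  apply: (dim_derivk_ge hf dim_f (uniq_deg_divisors _ _)) => b.
  by rewrite mem_deg_divisors.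
have [d_f dim_f] := derivk_space_dim_exists k f.
exists d_f; split=> //.
exact: leq_trans (leq_bin2l _ (r_le _ lead_f)) (binomial_nvars_le_dim_derivk hf dim_f).
Qed.
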